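(* Let $p\ge3$ be an integer, $N\ge 1$, $\Delta_2,\Delta_p>0$, let $Y\in\mathbb{R}^{N\times N}$ be a symmetric matrix and $T$ a symmetric order-$p$ tensor on $\mathbb{R}^N$. For $x\in\mathbb{R}^N$ define $$A_i(x)=\frac{\sqrt{(p-1)!}}{N^{(p-1)/2}}\sum_{k_2<\dots<k_p}\frac{T_{ik_2\dots k_p}}{\Delta_p}x_{k_2}\cdots x_{k_p}+\frac{1}{\sqrt N}\sum_k\frac{Y_{ik}}{\Delta_2}x_k .$$ The ML-AMP algorithm iterates, for $t\ge 1$, $$B^t_i=A_i(\hat x^t)-\mathrm r_t\,\hat x^{t-1}_i,\qquad \hat x^{t+1}_i=\frac{B^t_i}{\frac1{\sqrt N}\|B^t\|_2},\qquad \hat\sigma^{t+1}=\frac{1}{\frac1{\sqrt N}\|B^t\|_2},$$ $$\mathrm r_t=\frac{1}{\Delta_2}\frac1N\sum_k\hat\sigma^t_k+\frac{p-1}{\Delta_p}\frac1N\sum_k\hat\sigma^t_k\Big(\frac1N\sum_k\hat x^t_k\hat x^{t-1}_k\Big)^{p-2},$$ where $\hat\sigma^t_k=\hat\sigma^t$ for all $k$. Let $(\hat x^*,\hat\sigma^* )$ be a fixed point of this iteration (i.e. $\hat x^{t-1}=\hat x^t=\hat x^{t+1}=\hat x^*$ and $\hat\sigma^t=\hat\sigma^{t+1}=\hat\sigma^*$, with $B^*\neq 0$). Then $\hat x^*\in\mathbb{S}^{N-1}(\sqrt N)$ and $\hat x^*$ satisfies the stationarity condition of the loss $$\mathcal L(x)=\sum_{i<j}\frac{1}{2\Delta_2}\Big(Y_{ij}-\frac{x_ix_j}{\sqrt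 N}\Big)^2+\sum_{i_1<\dots<i_p}\frac{1}{2\Delta_p}\Big(T_{i_1\dots i_p}-\frac{\sqrt{(p-1)!}}{N^{(p-1)/2}}x_{i_1}\cdots x_{i_p}\Big)^2$$ on the sphere $\mathbb{S}^{N-1}(\sqrt N)$ in the sense that there exists $\mu\in\mathbb{R}$ with $$0=-\mu\,\hat x^*_i+\frac1{\sqrt N}\sum_k\frac{Y_{ik}}{\Delta_2}\hat x^*_k+\frac{\sqrt{(p-1)!}}{N^{(p-1)/2}}\sum_{k_2<\dots<k_p}\frac{T_{ik_2\dots k_p}}{\Delta_p}\hat x^*_{k_2}\cdots\hat x^*_{k_p}\quad\text{for all } i,$$ namely with $\mu=\frac1{\sqrt N}\|B^*\|_2+\mathrm r^*$, where $B^*,\mathrm r^*$ are the values of $B^t,\mathrm r_t$ at the fixed point.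
   Context: $\|\cdot\|_2$ is the Euclidean norm; $\mathbb{S}^{N-1}(\sqrt N)$ is the sphere of radius $\sqrt N$ in $\mathbb{R}^N$. The matrix and tensor entries appearing in the sums are taken with the same conventions in the algorithm and in the stationarity equation. *)

From mathcomp Require Import all_boot all_order all_algebra all_fingroup.
From mathcomp Require Import all_reals.
Set Implicit Arguments. Unset Strict Implicit. Unset Printing Implicit Defensive.
Import Order.TTheory GRing.Theory Num.Theory.
Local Open Scope ring_scope.

Section MLAMP.
Variable R : realType.

Definition norm2 (N : nat) (x : 'I_N -> R) : R := Num.sqrt (\sum_k x k ^+ 2).

Definition sym_tensor (p N : nat) (T : {ffun 'I_p -> 'I_N} -> R) : Prop :=
  forall (s : 'S_p) (f : {ffun 'I_p -> 'I_N}), T [ffun j => f (s j)] = T f.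

(* strictly increasing multi-index k_2 < ... < k_p (stored as g : 'I_(p-1) -> 'I_N) *)
Definition incr_idx (m N : nat) (g : {ffun 'I_m -> 'I_N}) : bool :=
  [forall a : 'I_m, forall b : 'I_m, ((a < b)%N ==> (g a < g b)%N)].

(* the multi-index (i, k_2, ..., k_p) *)
Definition cons_idx (p N : nat) (i : 'I_N) (g : {ffun 'I_p.-1 -> 'I_N})
  : {ffun 'I_p -> 'I_N} := [ffun j : 'I_p => nth i (i :: codom g) j].

Definition A_op (p N : nat) (D2 Dp : R) (Y : 'M[R]_N)
  (T : {ffun 'I_p -> 'I_N} -> R) (x : 'I_N -> R) (i : 'I_N) : R :=
  Num.sqrt ((p.-1)`!%:R) / (Num.sqrt (N%:R)) ^+ p.-1 *
    (\sum_(g : {ffun 'I_p.-1 -> 'I_N} | incr_idx g)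
        T (cons_idx i g) / Dp * \prod_(j < p.-1) x (g j))
  + 1 / Num.sqrt (N%:R) * \sum_k Y i k / D2 * x k.

(* Onsager coefficient r_t, with sigma^t_k = sigma for all k *)
Definition amp_r (p N : nat) (D2 Dp : R) (sigma : R) (xt xtm1 : 'I_N -> R) : R :=
  1 / D2 * (1 / N%:R * \sum_(k < N) sigma)
  + (p.-1)%:R / Dp * (1 / N%:R * \sum_(k < N) sigma)
      * (1 / N%:R * \sum_k xt k * xtm1 k) ^+ (p - 2).

Definition amp_B (p N : nat) (D2 Dp : R) (Y : 'M[R]_N)
  (T : {ffun 'I_p -> 'I_N} -> R) (sigma : R) (xt xtm1 : 'I_N -> R) (i : 'I_N) : R :=
  A_op D2 Dp Y T xt i - amp_r p D2 Dp sigma xt xtm1 * xtm1 i.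

Definition amp_x_next (p N : nat) (D2 Dp : R) (Y : 'M[R]_N)
  (T : {ffun 'I_p -> 'I_N} -> R) (sigma : R) (xt xtm1 : 'I_N -> R) (i : 'I_N) : R :=
  let B := amp_B D2 Dp Y T sigma xt xtm1 in
  B i / (1 / Num.sqrt (N%:R) * norm2 B).

Definition amp_sigma_next (p N : nat) (D2 Dp : R) (Y : 'M[R]_N)
  (T : {ffun 'I_p -> 'I_N} -> R) (sigma : R) (xt xtm1 : 'I_N -> R) : R :=
  1 / (1 / Num.sqrt (N%:R) * norm2 (amp_B D2 Dp Y T sigma xt xtm1)).

End MLAMP.

(* At a fixed point x with vector B = B(x, x), the update equation says
   B = c x with c = |B|_2 / sqrt N > 0, so x is B rescaled to norm sqrt N.
   Since B = A(x) - r x, this reads A(x) = (c + r) x, which is the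
   stationarity condition with mu = c + r. *)
From mathcomp Require Import all_boot all_order all_algebra all_fingroup.
From mathcomp Require Import all_reals.
Set Implicit Arguments. Unset Strict Implicit. Unset Printing Implicit Defensive.
Import Order.TTheory GRing.Theory Num.Theory.
Local Open Scope ring_scope.

Section Norm2.
Variables (R : realType) (N : nat).
Implicit Types (x y : 'I_N -> R) (a : R).

Lemma eq_norm2 x y : x =1 y -> norm2 x = norm2 y.
Proof. by move=> exy; rewrite /norm2; under eq_bigr do rewrite exy. Qed.

Lemma norm2_scale a x : norm2 (fun k => a * x k) = `|a| * norm2 x.
Proof.
rewrite /norm2; under eq_bigr do rewrite exprMn.
by rewrite -mulr_sumr sqrtrM ?sqr_ge0 // sqrtr_sqr.
Qed.

Lemma norm2_gt0 x i : x i != 0 -> 0 < norm2 x.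
Proof.
move=> xi_neq0; rewrite sqrtr_gt0 (bigD1 i) //=.
by rewrite ltr_wpDr ?sumr_ge0 // => [k _|]; rewrite ?sqr_ge0 ?exprn_even_gt0.
Qed.

Lemma norm2_normalize a x i : 0 < a -> x i != 0 ->
  norm2 (fun k => x k / (a * norm2 x)) = a^-1.
Proof.
move=> a_gt0 xi_neq0; have x_gt0 := norm2_gt0 xi_neq0.
rewrite (@eq_norm2 _ (fun k => (a * norm2 x)^-1 * x k)) => [|k]; last exact: mulrC.
rewrite norm2_scale ger0_norm ?invr_ge0 ?mulr_ge0 ?ltW //.
by rewrite invfM -mulrA mulVf ?mulr1 // gt_eqF.
Qed.

End Norm2.

Section FixedPoint.
Variables (R : realType) (p N : nat) (D2 Dp : R) (Y : 'M[R]_N).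
Variables (T : {ffun 'I_p -> 'I_N} -> R) (xs : 'I_N -> R) (sigma : R).
Hypothesis N_gt0 : (0 < N)%N.

Let B := amp_B D2 Dp Y T sigma xs xs.
Let c := 1 / Num.sqrt (N%:R) * norm2 B.
Let r := amp_r p D2 Dp sigma xs xs.

Hypothesis fixed_x : forall i, amp_x_next D2 Dp Y T sigma xs xs i = xs i.

Lemma isqrtN_gt0 : 0 < 1 / Num.sqrt (N%:R) :> R.
Proof. by rewrite div1r invr_gt0 sqrtr_gt0 ltr0n. Qed.

Lemma amp_fixed_point_norm i0 : B i0 != 0 -> norm2 xs = Num.sqrt (N%:R).
Proof.
move=> Bi0_neq0; rewrite -(eq_norm2 fixed_x).
by rewrite (norm2_normalize isqrtN_gt0 Bi0_neq0) div1r invrK.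
Qed.

Lemma amp_fixed_point_B i0 : B i0 != 0 -> forall i, B i = c * xs i.
Proof.
move=> Bi0_neq0 i.
have c_gt0 : 0 < c by rewrite mulr_gt0 ?isqrtN_gt0 ?(norm2_gt0 Bi0_neq0).
by rewrite -fixed_x /amp_x_next -/B -/c mulrC divfK ?gt_eqF.
Qed.

Lemma amp_fixed_point_stationary i0 : B i0 != 0 ->
  forall i, A_op D2 Dp Y T xs i = (c + r) * xs i.
Proof.
move=> Bi0_neq0 i.
by rewrite (mulrDl c r) -(amp_fixed_point_B Bi0_neq0) /B /amp_B subrK.
Qed.

End FixedPoint.

Theorem mainTheorem3 (R : realType) (p N : nat) (D2 Dp : R)
  (Y : 'M[R]_N) (T : {ffun 'I_p -> 'I_N} -> R)
  (xs : 'I_N -> R) (sigmas : R) :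
  (3 <= p)%N -> (1 <= N)%N -> 0 < D2 -> 0 < Dp ->
  Y^T = Y -> sym_tensor T ->
  (* fixed point: x^{t-1} = x^t = x^{t+1} = xs, sigma^t = sigma^{t+1} = sigmas, B* <> 0 *)
  (exists i, amp_B D2 Dp Y T sigmas xs xs i != 0) ->
  (forall i, amp_x_next D2 Dp Y T sigmas xs xs i = xs i) ->
  amp_sigma_next D2 Dp Y T sigmas xs xs = sigmas ->
  norm2 xs = Num.sqrt (N%:R) /\
  exists mu : R,
    mu = 1 / Num.sqrt (N%:R) * norm2 (amp_B D2 Dp Y T sigmas xs xs)
         + amp_r p D2 Dp sigmas xs xs /\
    forall i : 'I_N,
      0 = - mu * xs i
          + 1 / Num.sqrt (N%:R) * (\sum_k Y i k / D2 * xs k)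
          + Num.sqrt ((p.-1)`!%:R) / (Num.sqrt (N%:R)) ^+ p.-1 *
            (\sum_(g : {ffun 'I_p.-1 -> 'I_N} | incr_idx g)
               T (cons_idx i g) / Dp * \prod_(j < p.-1) xs (g j)).
Proof.
move=> _ N_gt0 _ _ _ _ [i0 Bi0_neq0] fixed_x _.
split; first exact: (amp_fixed_point_norm N_gt0 fixed_x Bi0_neq0).
eexists; split; first by [].
move=> i; rewrite -addrA [X in _ + X]addrC.
have := amp_fixed_point_stationary N_gt0 fixed_x Bi0_neq0 i.
by rewrite /A_op => ->; rewrite mulNr addNr.
Qed.
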